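(* Under the bilayer setting below (with $U$ even), let $\tilde\Psi_R$ be a solution of $\partial_x\tilde\Psi=A(x)\tilde\Psi$ of the form $$\tilde\Psi_R(x)=\begin{cases}\psi_R(x)+r(\theta)\psi_L(x)+\alpha_1\psi_+(x), & x<-x_0,\\ t(\theta)\psi_R(x)+\alpha_2\psi_-(x), & x>x_0,\end{cases}$$ with $r(\theta),t(\theta),\alpha_1,\alpha_2\in\mathbb{C}$ and $t(\theta)\neq0$. Then $q(\theta)=i\,\frac{r(\theta)}{t(\theta)}$ is real.
   Context: Bilayer setting: $U:\mathbb{R}\to\mathbb{R}$ piecewise continuous, supported in $[-x_0,x_0]$, even ($U(-x)=U(x)$). Fix $E>0$, $m,\hbar>0$, $\theta\in(-\pi/2,\pi/2)$; let $\kappa=\sqrt{2mE}/\hbar$, $a=\kappa\sin\theta$, $k=\kappa\cos\theta$, $\lambda=\sqrt{a^2+\kappa^2}$, $\tilde U(x)=\frac{2m}{\hbar^2}(U(x)-E)$. The ODE is $\partial_x\tilde\Psi=A(x)\tilde\Psi$ for $\tilde\Psi=(\Psi_1,\Phi_1,\Psi_2,\Phi_2)^t:\mathbb{R}\to\mathbb{C}^4$, $A(x)=\begin{pmatrix} a&1&0&0\\0&a&\tilde U(x)&0\\0&0&-a&1\\ \tilde U(x)&0&0&-a\end{pmatrix}$ (bilayer graphene equation after separation $e^{iay}$). Let $v_R=(a+ik,-\kappa^2,-(a-ik),-\kappa^2)^t$, $v_L=(a-ik,-\kappa^2,-(a+ik),-\kappa^2)^t$, $v_+=(a+\lambda,\kappa^2,a-\lambda,-\kappa^2)^t$,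 $v_-=(a-\lambda,\kappa^2,a+\lambda,-\kappa^2)^t$, and $\psi_R(x)=e^{ikx}v_R$, $\psi_L(x)=e^{-ikx}v_L$, $\psi_+(x)=e^{\lambda x}v_+$, $\psi_-(x)=e^{-\lambda x}v_-$; these solve the ODE where $U=0$. $r(\theta)$ and $t(\theta)$ are the reflection and transmission amplitudes, and $\theta$ is called magic if $r(\theta)=0$. *)

From Stdlib Require Import Reals Lra List.
Open Scope R_scope.

Definition Cplx := (R * R)%type.
Definition RtoC (x : R) : Cplx := (x, 0).
Definition Ci : Cplx := (0, 1).
Definition Cadd (z w : Cplx) : Cplx := (fst z + fst w, snd z + snd w).
Definition Cmul (z w : Cplx) : Cplx :=
  (fst z * fst w - snd z * snd w, fst z * snd w + snd z * fst w).
Definition Cinv (z : Cplx) : Cplx :=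
  (fst z / (fst z ^ 2 + snd z ^ 2), - snd z / (fst z ^ 2 + snd z ^ 2)).
Definition Cdiv (z w : Cplx) : Cplx := Cmul z (Cinv w).
Definition Cexpi (s : R) : Cplx := (cos s, sin s).
Definition Rscal (c : R) (z : Cplx) : Cplx := (c * fst z, c * snd z).

(* ---------- vectors of C^4 : (Psi1, Phi1, Psi2, Phi2) ---------- *)
Record V4 := mkV4 { c1 : Cplx; c2 : Cplx; c3 : Cplx; c4 : Cplx }.
Definition V4add (v w : V4) : V4 :=
  mkV4 (Cadd (c1 v) (c1 w)) (Cadd (c2 v) (c2 w)) (Cadd (c3 v) (c3 w)) (Cadd (c4 v) (c4 w)).
Definition V4scal (z : Cplx) (v : V4) : V4 :=
  mkV4 (Cmul z (c1 v)) (Cmul z (c2 v)) (Cmul z (c3 v)) (Cmul z (c4 v)).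

(* A(x) v with Ut = tilde U (x) *)
Definition Amul (a Ut : R) (v : V4) : V4 :=
  mkV4 (Cadd (Rscal a (c1 v)) (c2 v))
       (Cadd (Rscal a (c2 v)) (Rscal Ut (c3 v)))
       (Cadd (Rscal (- a) (c3 v)) (c4 v))
       (Cadd (Rscal Ut (c1 v)) (Rscal (- a) (c4 v))).

Definition Ccont (f : R -> Cplx) (x : R) : Prop :=
  continuity_pt (fun y => fst (f y)) x /\ continuity_pt (fun y => snd (f y)) x.
Definition Cderiv (f : R -> Cplx) (x : R) (d : Cplx) : Prop :=
  derivable_pt_lim (fun y => fst (f y)) x (fst d) /\
  derivable_pt_lim (fun y => snd (f y)) x (snd d).
Definition V4cont (F : R -> V4) (x : R) : Prop :=
  Ccont (fun y => c1 (F y)) x /\ Ccont (fun y => c2 (F y)) x /\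
  Ccont (fun y => c3 (F y)) x /\ Ccont (fun y => c4 (F y)) x.
Definition V4deriv (F : R -> V4) (x : R) (D : V4) : Prop :=
  Cderiv (fun y => c1 (F y)) x (c1 D) /\ Cderiv (fun y => c2 (F y)) x (c2 D) /\
  Cderiv (fun y => c3 (F y)) x (c3 D) /\ Cderiv (fun y => c4 (F y)) x (c4 D).

Definition right_limit (U : R -> R) (x L : R) : Prop :=
  forall eps, 0 < eps -> exists delta, 0 < delta /\
    forall y, x < y < x + delta -> Rabs (U y - L) < eps.
Definition left_limit (U : R -> R) (x L : R) : Prop :=
  forall eps, 0 < eps -> exists delta, 0 < delta /\
    forall y, x - delta < y < x -> Rabs (U y - L) < eps.
Definition piecewise_continuous (U : R -> R) : Prop :=
  exists D : list R,
    (forall x, ~ In x D -> continuity_pt U x) /\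
    (forall x, In x D -> (exists L, left_limit U x L) /\ (exists L, right_limit U x L)).

Definition kappa (m hbar E : R) : R := sqrt (2 * m * E) / hbar.
Definition a_par (m hbar E theta : R) : R := kappa m hbar E * sin theta.
Definition k_par (m hbar E theta : R) : R := kappa m hbar E * cos theta.
Definition lam (m hbar E theta : R) : R :=
  sqrt (a_par m hbar E theta ^ 2 + kappa m hbar E ^ 2).
Definition Utilde (U : R -> R) (m hbar E : R) (x : R) : R :=
  2 * m / hbar ^ 2 * (U x - E).

(* solution of d/dx Psi = A(x) Psi for piecewise continuous coefficients:
   continuous everywhere, and differentiable satisfying the ODE off a finite set *)
Definition is_solution (U : R -> R) (m hbar E theta : R) (Psi : R -> V4) : Prop :=
  (forall x, V4cont Psi x) /\
  exists S : list R, forall x, ~ In x S ->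
    V4deriv Psi x (Amul (a_par m hbar E theta) (Utilde U m hbar E x) (Psi x)).

Section Vectors.
Variables m hbar E theta : R.
Let a := a_par m hbar E theta.
Let k := k_par m hbar E theta.
Let kp := kappa m hbar E.
Let l := lam m hbar E theta.
Definition vR : V4 := mkV4 (a, k) (- kp ^ 2, 0) (- a, k) (- kp ^ 2, 0).
Definition vL : V4 := mkV4 (a, - k) (- kp ^ 2, 0) (- a, - k) (- kp ^ 2, 0).
Definition vP : V4 := mkV4 (a + l, 0) (kp ^ 2, 0) (a - l, 0) (- kp ^ 2, 0).
Definition vM : V4 := mkV4 (a - l, 0) (kp ^ 2, 0) (a + l, 0) (- kp ^ 2, 0).
Definition psiR (x : R) : V4 := V4scal (Cexpi (k * x)) vR.
Definition psiL (x : R) : V4 := V4scal (Cexpi (- k * x)) vL.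
Definition psiP (x : R) : V4 := V4scal (RtoC (exp (l * x))) vP.
Definition psiM (x : R) : V4 := V4scal (RtoC (exp (- l * x))) vM.
End Vectors.

(* For an even potential the equation commutes with the reflection x |-> -x, so the
   antisymmetric pairing F(x) = Im <Psi(x), J Psi(-x)>, with J swapping Psi_j and Phi_j,
   has zero derivative off a finite set and is therefore constant.  Being odd in x, it
   vanishes identically.  Evaluated at x > x0 on the scattering solution only the
   oscillating parts survive, giving F = 4 kappa^2 k Re(r conj t), so r / t is purely
   imaginary. *)
From Stdlib Require Import Reals List Lra.
Open Scope R_scope.

Lemma eq_of_derivable_pt_lim0 (f : R -> R) a b : a <= b ->
  (forall x, a <= x <= b -> continuity_pt f x) ->
  (forall x, a < x < b -> derivable_pt_lim f x 0) -> f a = f b.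
Proof.
  intros Hab Hc Hd.
  assert (pr : forall x, a < x < b -> derivable_pt f x)
    by (intros x Hx; exists 0; apply Hd, Hx).
  assert (Hf : constant_D_eq f (fun x => a <= x <= b) (f a)).
  { apply (null_derivative_loc f a b pr Hc).
    intros x Px. apply derive_pt_eq_0, Hd, Px. }
  symmetry. apply Hf. lra.
Qed.

Lemma eq_of_derivable_pt_lim0_off_list (f : R -> R) (L : list R) a b : a <= b ->
  (forall x, a <= x <= b -> continuity_pt f x) ->
  (forall x, a < x < b -> ~ In x L -> derivable_pt_lim f x 0) -> f a = f b.
Proof.
  revert a b. induction L as [|p L IH]; intros a b Hab Hc Hd.
  - apply eq_of_derivable_pt_lim0; auto.
  - assert (HdL : forall a' b', a <= a' -> b' <= b -> (a' < p < b' -> False) ->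
              forall x, a' < x < b' -> ~ In x L -> derivable_pt_lim f x 0).
    { intros a' b' Ha Hb Hp x Hx Hn. apply Hd; [lra|].
      intros [<- | Hi]; [apply Hp; lra | tauto]. }
    destruct (Rlt_dec a p) as [Hap|Hap]; [destruct (Rlt_dec p b) as [Hpb|Hpb]|].
    + transitivity (f p); apply IH; try lra;
        [intros; apply Hc; lra | apply (HdL a p) | intros; apply Hc; lra | apply (HdL p b)];
        lra.
    + apply IH; auto. apply (HdL a b); lra.
    + apply IH; auto. apply (HdL a b); lra.
Qed.

(* [Ccross z w = Im (conj z * w)] *)
Definition Ccross (z w : Cplx) : R := fst z * snd w - snd z * fst w.

Lemma derivable_pt_lim_Ccross (f g : R -> Cplx) x df dg :
  Cderiv f x df -> Cderiv g x dg ->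
  derivable_pt_lim (fun y => Ccross (f y) (g y)) x (Ccross df (g x) + Ccross (f x) dg).
Proof.
  intros [H1 H2] [H3 H4]. unfold Ccross.
  replace (fst df * snd (g x) - snd df * fst (g x) + (fst (f x) * snd dg - snd (f x) * fst dg))
    with (fst df * snd (g x) + fst (f x) * snd dg - (snd df * fst (g x) + snd (f x) * fst dg))
    by ring.
  exact (derivable_pt_lim_minus _ _ _ _ _
    (derivable_pt_lim_mult _ _ _ _ _ H1 H4) (derivable_pt_lim_mult _ _ _ _ _ H2 H3)).
Qed.

Lemma continuity_pt_Ccross (f g : R -> Cplx) x : Ccont f x -> Ccont g x ->
  continuity_pt (fun y => Ccross (f y) (g y)) x.
Proof.
  intros [H1 H2] [H3 H4]. unfold Ccross.
  exact (continuity_pt_minus _ _ _ (continuity_pt_mult _ _ _ H1 H4)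
           (continuity_pt_mult _ _ _ H2 H3)).
Qed.

Lemma derivable_pt_lim_reflect (h : R -> R) x d : derivable_pt_lim h (- x) d ->
  derivable_pt_lim (fun y => h (- y)) x (- d).
Proof.
  intros H.
  replace (- d) with (d * -1) by ring.
  apply (derivable_pt_lim_comp Ropp h x (-1) d); [|exact H].
  exact (derivable_pt_lim_opp _ _ _ (derivable_pt_lim_id x)).
Qed.

Lemma Cderiv_reflect (f : R -> Cplx) x d : Cderiv f (- x) d ->
  Cderiv (fun y => f (- y)) x (- fst d, - snd d).
Proof.
  intros [H1 H2]; split; apply (derivable_pt_lim_reflect (fun y => _ (f y))); assumption.
Qed.

Lemma continuity_pt_reflect (h : R -> R) x : continuity_pt h (- x) ->
  continuity_pt (fun y => h (- y)) x.
Proof.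
  apply (continuity_pt_comp Ropp h x).
  exact (continuity_pt_opp _ _ (derivable_continuous_pt _ _ (derivable_pt_id x))).
Qed.

Lemma Ccont_reflect (f : R -> Cplx) x : Ccont f (- x) -> Ccont (fun y => f (- y)) x.
Proof.
  intros [H1 H2]; split; apply (continuity_pt_reflect (fun y => _ (f y))); assumption.
Qed.

Definition reflection_pairing (Psi : R -> V4) (x : R) : R :=
  Ccross (c1 (Psi x)) (c2 (Psi (- x))) + Ccross (c2 (Psi x)) (c1 (Psi (- x))) +
  Ccross (c3 (Psi x)) (c4 (Psi (- x))) + Ccross (c4 (Psi x)) (c3 (Psi (- x))).

Lemma reflection_pairing_odd (Psi : R -> V4) x :
  reflection_pairing Psi (- x) = - reflection_pairing Psi x.
Proof. unfold reflection_pairing, Ccross. rewrite Ropp_involutive. ring. Qed.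

Lemma reflection_pairing_continuous (Psi : R -> V4) x :
  V4cont Psi x -> V4cont Psi (- x) -> continuity_pt (reflection_pairing Psi) x.
Proof.
  intros [A1 [A2 [A3 A4]]] [B1 [B2 [B3 B4]]].
  apply Ccont_reflect in B1, B2, B3, B4.
  unfold reflection_pairing.
  apply continuity_pt_plus; [apply continuity_pt_plus; [apply continuity_pt_plus|]|];
    apply (continuity_pt_Ccross (fun y => _ (Psi y)) (fun y => _ (Psi (- y)))); assumption.
Qed.

Lemma reflection_pairing_derive0 (Psi : R -> V4) a u x :
  V4deriv Psi x (Amul a u (Psi x)) -> V4deriv Psi (- x) (Amul a u (Psi (- x))) ->
  derivable_pt_lim (reflection_pairing Psi) x 0.
Proof.
  intros [A1 [A2 [A3 A4]]] [B1 [B2 [B3 B4]]].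
  apply Cderiv_reflect in B1, B2, B3, B4.
  pose proof (derivable_pt_lim_plus _ _ _ _ _
    (derivable_pt_lim_plus _ _ _ _ _
      (derivable_pt_lim_plus _ _ _ _ _
        (derivable_pt_lim_Ccross _ _ _ _ _ A1 B2) (derivable_pt_lim_Ccross _ _ _ _ _ A2 B1))
      (derivable_pt_lim_Ccross _ _ _ _ _ A3 B4))
    (derivable_pt_lim_Ccross _ _ _ _ _ A4 B3)) as H.
  match type of H with derivable_pt_lim _ _ ?l => replace 0 with l end; [exact H|].
  destruct (Psi x) as [[p1 q1] [p2 q2] [p3 q3] [p4 q4]].
  destruct (Psi (- x)) as [[r1 s1] [r2 s2] [r3 s3] [r4 s4]].
  unfold Ccross, Amul, Cadd, Rscal; simpl. ring.
Qed.

Lemma reflection_pairing_eq0 (U : R -> R) m hbar E theta (Psi : R -> V4) :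
  (forall x, U (- x) = U x) -> is_solution U m hbar E theta Psi ->
  forall y, reflection_pairing Psi y = 0.
Proof.
  intros Hev [Hc [S HS]].
  assert (Hconst : forall y, 0 <= y -> reflection_pairing Psi (- y) = reflection_pairing Psi y).
  { intros y Hy.
    apply (eq_of_derivable_pt_lim0_off_list _ (S ++ map Ropp S)); [lra| |].
    - intros x _. apply reflection_pairing_continuous; apply Hc.
    - intros x _ Hn. apply (reflection_pairing_derive0 _ (a_par m hbar E theta)
                              (Utilde U m hbar E x)).
      + apply HS. intro Hi. apply Hn, in_or_app. left. exact Hi.
      + replace (Utilde U m hbar E x) with (Utilde U m hbar E (- x))
          by (unfold Utilde; rewrite Hev; reflexivity).
        apply HS. intro Hi. apply Hn, in_or_app. right.
        rewrite <- (Ropp_involutive x). apply in_map, Hi. }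
  intro y. destruct (Rle_dec 0 y) as [Hy|Hy].
  - pose proof (Hconst y Hy). rewrite reflection_pairing_odd in H. lra.
  - pose proof (Hconst (- y) ltac:(lra)). rewrite reflection_pairing_odd in H.
    rewrite <- (Ropp_involutive y), reflection_pairing_odd. lra.
Qed.

(* The growing and decaying modes drop out, and the oscillating ones pair to a constant. *)
Lemma reflection_pairing_scattering (Psi : R -> V4) m hbar E theta r t alpha1 alpha2 y :
  Psi y = V4add (V4scal t (psiR m hbar E theta y)) (V4scal alpha2 (psiM m hbar E theta y)) ->
  Psi (- y) = V4add (psiR m hbar E theta (- y))
                (V4add (V4scal r (psiL m hbar E theta (- y)))
                       (V4scal alpha1 (psiP m hbar E theta (- y)))) ->
  reflection_pairing Psi y =
    4 * kappa m hbar E ^ 2 * k_par m hbar E theta * (fst r * fst t + snd r * snd t).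
Proof.
  intros Hpos Hneg. unfold reflection_pairing. rewrite Hpos, Hneg.
  unfold psiR, psiL, psiP, psiM, vR, vL, vP, vM, Cexpi.
  set (k := k_par m hbar E theta).
  replace (k * - y) with (- (k * y)) by ring.
  replace (- k * - y) with (k * y) by ring.
  rewrite cos_neg, sin_neg.
  pose proof (sin2_cos2 (k * y)) as Hsc. unfold Rsqr in Hsc.
  destruct r as [r1 r2], t as [t1 t2], alpha1, alpha2.
  unfold V4add, V4scal, RtoC, Cmul, Cadd, Ccross; simpl.
  transitivity (4 * kappa m hbar E ^ 2 * k * (r1 * t1 + r2 * t2) *
                  (sin (k * y) * sin (k * y) + cos (k * y) * cos (k * y))); [ring|].
  rewrite Hsc. ring.
Qed.

Lemma kappa_gt0 m hbar E : 0 < m -> 0 < hbar -> 0 < E -> 0 < kappa m hbar E.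
Proof.
  intros Hm Hh HE. unfold kappa. apply Rdiv_lt_0_compat; [apply sqrt_lt_R0; nra | lra].
Qed.

Lemma k_par_gt0 m hbar E theta : 0 < m -> 0 < hbar -> 0 < E ->
  - (PI / 2) < theta < PI / 2 -> 0 < k_par m hbar E theta.
Proof.
  intros Hm Hh HE Hth. unfold k_par.
  apply Rmult_lt_0_compat; [apply kappa_gt0; assumption | apply cos_gt_0; lra].
Qed.

(* No hypothesis [t <> 0] is needed: [Cinv (0, 0) = (0, 0)]. *)
Lemma Im_Ci_Cdiv (r t : Cplx) : fst r * fst t + snd r * snd t = 0 ->
  snd (Cmul Ci (Cdiv r t)) = 0.
Proof.
  destruct r as [r1 r2], t as [t1 t2]; cbn [fst snd]; intros Hre.
  cbv [Cmul Cdiv Cinv Ci Rdiv fst snd].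
  transitivity ((r1 * t1 + r2 * t2) * / (t1 ^ 2 + t2 ^ 2)); [ring|].
  rewrite Hre. ring.
Qed.

Theorem proposition3 (U : R -> R) (x0 E m hbar theta : R)
  (r t alpha1 alpha2 : Cplx) (Psi : R -> V4) :
  piecewise_continuous U ->
  0 < x0 ->
  (forall x, x0 < Rabs x -> U x = 0) ->
  (forall x, U (- x) = U x) ->
  0 < E -> 0 < m -> 0 < hbar ->
  - (PI / 2) < theta < PI / 2 ->
  is_solution U m hbar E theta Psi ->
  (forall x, x < - x0 ->
     Psi x = V4add (psiR m hbar E theta x)
               (V4add (V4scal r (psiL m hbar E theta x))
                      (V4scal alpha1 (psiP m hbar E theta x)))) ->
  (forall x, x0 < x ->
     Psi x = V4add (V4scal t (psiR m hbar E theta x))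
                   (V4scal alpha2 (psiM m hbar E theta x))) ->
  t <> (0, 0) ->
  snd (Cmul Ci (Cdiv r t)) = 0.
Proof.
  intros _ Hx0 _ Hev HE Hm Hh Hth Hsol Hleft Hright _.
  apply Im_Ci_Cdiv.
  pose proof (reflection_pairing_eq0 U m hbar E theta Psi Hev Hsol (x0 + 1)) as H0.
  rewrite (reflection_pairing_scattering Psi m hbar E theta r t alpha1 alpha2) in H0;
    [| apply Hright; lra | apply Hleft; lra].
  pose proof (kappa_gt0 m hbar E Hm Hh HE) as Hk.
  pose proof (k_par_gt0 m hbar E theta Hm Hh HE Hth) as Hkp.
  assert (Hpos : 0 < 4 * kappa m hbar E ^ 2 * k_par m hbar E theta)
    by (pose proof (pow_lt _ 2 Hk); nra).
  apply (Rmult_eq_reg_l (4 * kappa m hbar E ^ 2 * k_par m hbar E theta)); lra.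
Qed.
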